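(* Let $f=f_1+f_2$ and $l=l_1+l_2$ be as in the context and assume there are $C\ge0$, $C_1\ge0$, $C_2,C_3>0$ such that for all $x\in H$, $\mu\in\mathcal P_2(H)$, $q\in\tilde\Lambda$: $|f_2(x,\mu,q)|\le C(1+|q|_\Lambda)$ and $-C_1+C_2|q|_\Lambda^2\le l_2(x,\mu,q)\le C_1+C_3|q|_\Lambda^2$ (and $|f(x,\mu,q)|_{-1}\le C(1+|x|_{-1}+\mathcal M_{-1,r}^{1/r}(\mu)+|q|_\Lambda)$ for a fixed $r\in[1,2)$). Then for every $\tilde C>0$ there is a constant $K>0$ such that $$\mathcal H_n(\mathbf x,\mu,\mathbf p)=\mathcal H_n^{K\sqrt n}(\mathbf x,\mu,\mathbf p)$$ for all $n\in\mathbb N$, $\mu\in\mathcal P_2(H)$ and $\mathbf x,\mathbf p\in H^n$ with $|\mathbf p|_{H^n}\le\tilde C/\sqrt n$.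
   Context: $H,\Lambda$ real separable Hilbert spaces ($H$: inner product $\langle\cdot,\cdot\rangle$, norm $|\cdot|$; $\Lambda$: norm $|\cdot|_\Lambda$), $\tilde\Lambda\subset\Lambda$ convex. $B\in L(H)$ self-adjoint, strictly positive, $|x|_{-1}^2=\langle Bx,x\rangle$; $\mathcal P_2(H)$ probability measures with finite second moment; $\mathcal M_{-1,r}(\mu)=\int|x|_{-1}^r\mu(dx)$. $f=f_1+f_2$ with $f_1:H\times\mathcal P_2(H)\to H$, $f_2:H\times\mathcal P_2(H)\times\Lambda\to H$; $l=l_1+l_2$ with $l_1:H\times\mathcal P_2(H)\to\mathbb R$, $l_2:H\times\mathcal P_2(H)\times\Lambda\to\mathbb R$ continuous. For $\mathbf x,\mathbf p\in H^n$, $|\mathbf p|_{H^n}=(\sum|p_i|^2)^{1/2}$, $\mathbf q\in\tilde\Lambda^n$, $|\mathbf q|_{\Lambda^n}=(\sum|q_i|_\Lambda^2)^{1/2}$, and $\mathcal H_n(\mathbf x,\mu,\mathbf p)=\frac1n\inf_{\mathbf q\in\tilde\Lambda^n}\sum_{i=1}^n(\langle f(x_i,\mu,q_i),np_i\rangle+l(x_i,\mu,q_i))$, $\mathcal H_n^m(\mathbf x,\mu,\mathbf p)=\frac1n\inf_{\mathbf q\in\tilde\Lambda^n,|\mathbf q|_{\Lambda^n}\le m}\sum_{i=1}^n(\langle f(x_i,\mu,q_i),np_i\rangle+l(x_i,\mu,q_i))$ for $m>0$. *)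

From HB Require Import structures.
From mathcomp Require Import all_boot all_order all_algebra.
From mathcomp Require Import all_classical all_reals all_analysis.
Import Order.TTheory GRing.Theory Num.Theory numFieldNormedType.Exports.
Set Implicit Arguments. Unset Strict Implicit. Unset Printing Implicit Defensive.
Local Open Scope classical_set_scope.
Local Open Scope ring_scope.

Section Defs.
Context {R : realType}.

Definition is_inner_product (V : normedModType R) (ip : V -> V -> R) : Prop :=
  (forall x y, ip x y = ip y x) /\
  (forall (a : R) x y z, ip (a *: x + y) z = a * ip x z + ip y z) /\
  (forall x, `|x| ^+ 2 = ip x x).

Definition separable_space (T : topologicalType) : Prop :=
  exists D : set T, countable D /\ dense D.

Definition hilbert (V : completeNormedModType R) (ip : V -> V -> R) : Prop :=
  is_inner_product ip /\ separable_space V.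

Definition convex_subset (V : normedModType R) (A : set V) : Prop :=
  forall a b, A a -> A b -> forall t : R, 0 <= t <= 1 ->
    A (t *: a + (1 - t) *: b).

Definition selfadj_strictly_pos (V : normedModType R) (ip : V -> V -> R)
  (B : {linear V -> V}) : Prop :=
  continuous B /\ (forall x y, ip (B x) y = ip x (B y)) /\
  (forall x, x != 0 -> 0 < ip (B x) x).

Definition norm_m1 (V : normedModType R) (ip : V -> V -> R) (B : V -> V) (x : V) : R :=
  Num.sqrt (ip (B x) x).

Definition borel_of (V : topologicalType) := g_sigma_algebraType (@open V).

Definition P2 (V : normedModType R) :=
  { mu : probability (borel_of V) R |
      (\int[mu]_x ((`|(x : V)| ^+ 2)%:E) < +oo)%E }.

Definition M_m1 (V : normedModType R) (ip : V -> V -> R) (B : V -> V) (r : R)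
  (mu : P2 V) : \bar R :=
  (\int[sval mu]_x (((norm_m1 ip B (x : V)) `^ r)%:E))%E.

Definition norm_n (V : normedModType R) (n : nat) (p : 'I_n -> V) : R :=
  Num.sqrt (\sum_(i < n) `|p i| ^+ 2).

Definition Ham_gen (V L P : Type) (ip : V -> V -> R) (Vscale : R -> V -> V)
  (f : V -> P -> L -> V) (l : V -> P -> L -> R) (Lt : set L)
  (constr : forall n, ('I_n -> L) -> Prop)
  (n : nat) (x : 'I_n -> V) (mu : P) (p : 'I_n -> V) : \bar R :=
  ((n%:R)^-1%:E *
   ereal_inf [set (\sum_(i < n) (ip (f (x i) mu (q i)) (Vscale n%:R (p i))
                                  + l (x i) mu (q i)))%:E
             | q in [set q : 'I_n -> L | (forall i, Lt (q i)) /\ constr n q]])%E.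

Definition Ham_n (V L : normedModType R) (ip : V -> V -> R)
  (f : V -> P2 V -> L -> V) (l : V -> P2 V -> L -> R) (Lt : set L)
  (n : nat) (x : 'I_n -> V) (mu : P2 V) (p : 'I_n -> V) : \bar R :=
  Ham_gen ip (fun a v => a *: v) f l Lt (fun _ _ => True) x mu p.

Definition Ham_n_m (V L : normedModType R) (ip : V -> V -> R)
  (f : V -> P2 V -> L -> V) (l : V -> P2 V -> L -> R) (Lt : set L) (m : R)
  (n : nat) (x : 'I_n -> V) (mu : P2 V) (p : 'I_n -> V) : \bar R :=
  Ham_gen ip (fun a v => a *: v) f l Lt (fun k q => norm_n q <= m) x mu p.

End Defs.

(* Fix any a in the control set.  By Young's inequality and the growth bounds on
   f2 and l2, the cost of the constant control q_i = a is at most n c + |n p|^2/2,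
   while the coercivity of l2 makes the cost of any admissible q at least
   e |q|^2 - n c' - |n p|^2 / (2 e), with e = C2 / (C^2 + 1).  Since
   |n p|^2 <= Ct^2 n, a control with |q|^2 > K^2 n is beaten by the constant
   one once K is large, so restricting the infimum to |q| <= K sqrt n does not
   change it.  If the control set is empty, both infima are taken over the
   empty set. *)

From HB Require Import structures.
From mathcomp Require Import all_boot all_order all_algebra.
From mathcomp Require Import all_classical all_reals all_analysis.
From mathcomp Require Import ring lra.
Import Order.TTheory GRing.Theory Num.Theory numFieldNormedType.Exports.
Local Open Scope classical_set_scope.
Local Open Scope ring_scope.
Set Implicit Arguments. Unset Strict Implicit.

Section InnerProduct.
Variables (R : realType) (V : normedModType R) (ip : V -> V -> R).
Hypothesis hip : is_inner_product ip.

Lemma ip_addl x y z : ip (x + y) z = ip x z + ip y z.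
Proof. by have [_ [lin _]] := hip; have := lin 1 x y z; rewrite scale1r mul1r. Qed.

Lemma ip_oppl x z : ip (- x) z = - ip x z.
Proof.
have [_ [lin _]] := hip.
have ip0 : ip 0 z = 0 by have := ip_addl 0 0 z; rewrite addr0; lra.
by have := lin (-1) x 0 z; rewrite addr0 ip0 addr0 scaleN1r mulN1r.
Qed.

Lemma ip_scale_subl a x y z : ip (a *: x - y) z = a * ip x z - ip y z.
Proof. by have [_ [lin _]] := hip; rewrite lin ip_oppl. Qed.

Lemma ip_young (e : R) u v : 0 < e ->
  2 * ip u v <= e * `|u| ^+ 2 + e^-1 * `|v| ^+ 2.
Proof.
move=> e_gt0; have [sym [_ sqr_norm]] := hip.
have : 0 <= ip (e *: u - v) (e *: u - v) by rewrite -sqr_norm sqr_ge0.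
rewrite !ip_scale_subl (sym u) (sym v) !ip_scale_subl (sym v u) !sqr_norm => h.
rewrite -(ler_pM2l e_gt0) mulrDr [e * (e^-1 * _)]mulrA mulfV ?gt_eqF // mul1r; nra.
Qed.

End InnerProduct.

Section CoerciveCost.
Variables (R : realType) (V L : normedModType R) (ip : V -> V -> R).
Hypothesis hip : is_inner_product ip.
Variables (Lt : set L) (n : nat) (f : 'I_n -> L -> V) (l : 'I_n -> L -> R).
Variables (C C1 C2 C3 : R).
Hypothesis hC : 0 <= C.
Hypothesis hf : forall i q, Lt q -> `|f i q| <= C * (1 + `|q|).
Hypothesis hl : forall i q, Lt q ->
  - C1 + C2 * `|q| ^+ 2 <= l i q <= C1 + C3 * `|q| ^+ 2.

Lemma sqr_norm_drift_le i q : Lt q -> `|f i q| ^+ 2 <= C ^+ 2 * (1 + `|q|) ^+ 2.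
Proof. by move=> Lq; rewrite -exprMn ler_sqr ?nnegrE ?hf // mulr_ge0 ?addr_ge0. Qed.

Lemma running_cost_le i q w : Lt q ->
  ip (f i q) w + l i q <=
  C1 + C3 * `|q| ^+ 2 + C ^+ 2 * (1 + `|q|) ^+ 2 / 2 + `|w| ^+ 2 / 2.
Proof.
move=> Lq; have := ip_young hip (f i q) w ltr01; rewrite invr1 !mul1r.
have := sqr_norm_drift_le i Lq; have /andP[_ ?] := hl i Lq; lra.
Qed.

Lemma running_cost_ge i e q w : 0 < e -> Lt q ->
  (C2 - e * C ^+ 2) * `|q| ^+ 2 - (C1 + e * C ^+ 2 + e^-1 * `|w| ^+ 2 / 2)
  <= ip (f i q) w + l i q.
Proof.
move=> e_gt0 Lq; have := ip_young hip (- f i q) w e_gt0; rewrite ip_oppl // normrN.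
have : e * `|f i q| ^+ 2 <= e * (C ^+ 2 * (2 * (1 + `|q| ^+ 2))).
  rewrite ler_pM2l //; apply: le_trans (sqr_norm_drift_le i Lq) _.
  by apply: ler_wpM2l (sqr_ge0 C) _ _ _; have := sqr_ge0 (1 - `|q|); lra.
have /andP[? _] := hl i Lq; lra.
Qed.

Lemma sum_cost_const_le a q e (w : 'I_n -> V) : 0 < e -> Lt a -> (forall i, Lt (q i)) ->
  n%:R * (C1 + C3 * `|a| ^+ 2 + C ^+ 2 * (1 + `|a|) ^+ 2 / 2 + (C1 + e * C ^+ 2))
    + (1 + e^-1) / 2 * \sum_i `|w i| ^+ 2
  <= (C2 - e * C ^+ 2) * \sum_i `|q i| ^+ 2 ->
  \sum_i (ip (f i a) (w i) + l i a) <= \sum_i (ip (f i (q i)) (w i) + l i (q i)).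
Proof.
move=> e_gt0 La Lq large.
apply: le_trans (ler_sum _ (fun i _ => running_cost_le i (w i) La)) _.
apply: le_trans (ler_sum _ (fun i _ => running_cost_ge i (w i) e_gt0 (Lq i))).
rewrite !big_split sumrN big_split /= !sumr_const card_ord -!mulr_suml -!mulr_sumr.
lra.
Qed.

End CoerciveCost.

Lemma norm_n_le_sqr (R : realType) (V : normedModType R) n (q : 'I_n -> V) (m : R) :
  0 <= m -> (norm_n q <= m) = (\sum_i `|q i| ^+ 2 <= m ^+ 2).
Proof. by move=> m_ge0; rewrite /norm_n -{1}(ger0_norm m_ge0) -sqrtr_sqr ler_sqrt ?sqr_ge0. Qed.

Lemma sum_sqr_scale_le (R : realType) (V : normedModType R) n (p : 'I_n -> V) (c : R) :
  (0 < n)%N -> 0 <= c -> norm_n p <= c / Num.sqrt n%:R ->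
  \sum_i `|n%:R *: p i| ^+ 2 <= n%:R * c ^+ 2.
Proof.
move=> n_gt0 c_ge0; have n_gt0R : 0 < n%:R :> R by rewrite ltr0n.
rewrite norm_n_le_sqr ?divr_ge0 ?sqrtr_ge0 // expr_div_n sqr_sqrtr ?ler0n // => le_c.
under eq_bigr do rewrite normrZ ger0_norm ?ler0n // exprMn.
rewrite -mulr_sumr; apply: le_trans (ler_wpM2l (sqr_ge0 _) le_c) _.
by rewrite expr2 -mulrA [_ * (c ^+ 2 / _)]mulrC divfK ?gt_eqF.
Qed.

Lemma truncation_radius (R : realFieldType) (a c A D : R) : 0 <= a -> 0 < c ->
  exists2 K, 0 < K /\ a <= K &
    forall n S W, 0 <= n -> W <= n * D -> K ^+ 2 * n <= S -> n * A + W <= c * S.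
Proof.
move=> a_ge0 c_gt0; have ratio_ge0 := divr_ge0 (normr_ge0 (A + D)) (ltW c_gt0).
pose K := 1 + a + `|A + D| / c.
exists K; first by split; rewrite /K; lra.
move=> n S W n_ge0 le_W le_S.
have le_AD : A + D <= c * K ^+ 2.
  rewrite -ler_pdivrMl // mulrC; apply: le_trans (_ : _ <= `|A + D| / c) _.
    by rewrite ler_pM2r ?invr_gt0 // ler_norm.
  apply: le_trans (_ : K <= K ^+ 2); first by rewrite /K; lra.
  by rewrite expr2 ler_peMl //; rewrite /K; lra.
have := ler_wpM2l n_ge0 le_AD; have := ler_wpM2l (ltW c_gt0) le_S; lra.
Qed.

Lemma ereal_inf_dominated_subset (R : realType) (T : Type) (P Q : set T) (v : T -> R) :
  Q `<=` P -> (forall q, P q -> exists2 q', Q q' & v q' <= v q) ->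
  ereal_inf [set (v q)%:E | q in P] = ereal_inf [set (v q)%:E | q in Q].
Proof.
move=> QP dominated; apply/le_anti/andP; split.
  by apply: ereal_inf_le_tmp => _ [q Qq <-]; exists q => //; apply: QP.
apply: le_ereal_inf_tmp => _ [q Pq <-]; have [q' Qq' le_v] := dominated q Pq.
by apply: ge_ereal_inf; exists (v q')%:E; [exists q' | rewrite lee_fin].
Qed.

Definition Ham_cost (R : realType) (V : normedModType R) (L P : Type) (ip : V -> V -> R)
    (f : V -> P -> L -> V) (l : V -> P -> L -> R)
    (n : nat) (x : 'I_n -> V) (mu : P) (p : 'I_n -> V) (q : 'I_n -> L) : R :=
  \sum_(i < n) (ip (f (x i) mu (q i)) (n%:R *: p i) + l (x i) mu (q i)).

Lemma Ham_n_eq_Ham_n_m (R : realType) (V L : normedModType R) (ip : V -> V -> R)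
    (f : V -> P2 V -> L -> V) (l : V -> P2 V -> L -> R) (Lt : set L) (m : R)
    n (x : 'I_n -> V) (mu : P2 V) (p : 'I_n -> V) :
  (forall q, (forall i, Lt (q i)) ->
     exists2 q', (forall i, Lt (q' i)) /\ norm_n q' <= m &
                 Ham_cost ip f l x mu p q' <= Ham_cost ip f l x mu p q) ->
  Ham_n ip f l Lt x mu p = Ham_n_m ip f l Lt m x mu p.
Proof.
move=> dominated; rewrite /Ham_n /Ham_n_m /Ham_gen; congr (_ * _)%E.
apply: ereal_inf_dominated_subset => [q [Lq _] //|q [Lq _]].
exact: dominated.
Qed.

Lemma Ham_cost_split (R : realType) (V : normedModType R) (L P : Type) (ip : V -> V -> R)
    (hip : is_inner_product ip) (f1 : V -> P -> V) (f2 : V -> P -> L -> V)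
    (l1 : V -> P -> R) (l2 : V -> P -> L -> R) n (x : 'I_n -> V) (mu : P) p q :
  Ham_cost ip (fun y nu q => f1 y nu + f2 y nu q) (fun y nu q => l1 y nu + l2 y nu q) x mu p q
  = \sum_i (ip (f1 (x i) mu) (n%:R *: p i) + l1 (x i) mu) + Ham_cost ip f2 l2 x mu p q.
Proof. by rewrite -big_split; apply: eq_bigr => i _ /=; rewrite ip_addl // addrACA. Qed.

Unset Implicit Arguments.

Theorem lemma4p8 (R : realType) (H Lam : completeNormedModType R)
  (ip : H -> H -> R) (ipL : Lam -> Lam -> R)
  (hH : hilbert ip) (hL : hilbert ipL)
  (Lt : set Lam) (hLt : convex_subset Lt)
  (B : {linear H -> H}) (hB : selfadj_strictly_pos ip B)
  (r : R) (hr : 1 <= r < 2)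
  (f1 : H -> P2 H -> H) (f2 : H -> P2 H -> Lam -> H)
  (l1 : H -> P2 H -> R) (l2 : H -> P2 H -> Lam -> R)
  (C C1 C2 C3 : R) (hC : 0 <= C) (hC1 : 0 <= C1) (hC2 : 0 < C2) (hC3 : 0 < C3)
  (hf2 : forall x mu q, Lt q -> `|f2 x mu q| <= C * (1 + `|q|))
  (hl2 : forall x mu q, Lt q ->
     - C1 + C2 * `|q| ^+ 2 <= l2 x mu q <= C1 + C3 * `|q| ^+ 2)
  (hf : forall x mu q, Lt q ->
     ((norm_m1 ip B (f1 x mu + f2 x mu q))%:E <=
      C%:E * (1 + (norm_m1 ip B x)%:E + (M_m1 ip B r mu) `^ r^-1 + `|q|%:E))%E) :
  forall Ct : R, 0 < Ct ->
  exists K : R, 0 < K /\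
    forall (n : nat), (0 < n)%N ->
    forall (mu : P2 H) (x p : 'I_n -> H),
      norm_n p <= Ct / Num.sqrt n%:R ->
      Ham_n ip (fun y nu q => f1 y nu + f2 y nu q) (fun y nu q => l1 y nu + l2 y nu q)
        Lt x mu p =
      Ham_n_m ip (fun y nu q => f1 y nu + f2 y nu q) (fun y nu q => l1 y nu + l2 y nu q)
        Lt (K * Num.sqrt n%:R) x mu p.
Proof.
move=> Ct Ct_gt0; have [hip _] := hH.
have [[a La]|Lt0] := pselect (exists a, Lt a); last first.
  exists 1; split=> // n n_gt0 mu x p _; apply: Ham_n_eq_Ham_n_m => q Lq.
  by case: Lt0; exists (q (Ordinal n_gt0)).
pose e := C2 / (C ^+ 2 + 1).
have sqrC1_gt0 : 0 < C ^+ 2 + 1 by rewrite ltr_wpDl ?sqr_ge0.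
have e_gt0 : 0 < e by rewrite divr_gt0.
have coercivity : C2 - e * C ^+ 2 = e by rewrite /e; field; rewrite gt_eqF.
have [K [K_gt0 aK] radius] := truncation_radius
  (C1 + C3 * `|a| ^+ 2 + C ^+ 2 * (1 + `|a|) ^+ 2 / 2 + (C1 + e * C ^+ 2))
  ((1 + e^-1) / 2 * Ct ^+ 2) (normr_ge0 a) e_gt0.
exists K; split=> // n n_gt0 mu x p small_p.
have radius_ge0 : 0 <= K * Num.sqrt n%:R by rewrite mulr_ge0 ?sqrtr_ge0 ?ltW.
apply: Ham_n_eq_Ham_n_m => q Lq.
have [small_q|large_q] := boolP (norm_n q <= K * Num.sqrt n%:R); first by exists q.
exists (fun=> a).
  split=> //; rewrite norm_n_le_sqr // exprMn sqr_sqrtr ?ler0n //.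
  by rewrite sumr_const card_ord -[_ *+ n]mulr_natr ler_pM2r ?ltr0n // ler_sqr ?nnegrE ?(ltW K_gt0).
rewrite !Ham_cost_split // lerD2l.
apply: (sum_cost_const_le hip hC (fun i => hf2 (x i) mu) (fun i => hl2 (x i) mu) (e := e)) => //.
rewrite coercivity.
apply: radius; first exact: ler0n.
  rewrite mulrCA; apply: ler_wpM2l; last exact: sum_sqr_scale_le n_gt0 (ltW Ct_gt0) small_p.
  by rewrite divr_ge0 // addr_ge0 // invr_ge0 ltW.
by move: large_q; rewrite norm_n_le_sqr // -ltNge exprMn sqr_sqrtr ?ler0n // => /ltW.
Qed.
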